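(* Let $v\geq 8$ and let $C_v$ be the cyclic configuration on point set $\mathbb{Z}_v$ whose blocks are $\{m,m+1,m+3\}$ for $m\in\mathbb{Z}_v$. Then the minimum cardinality of a blocking set of $C_v$ is \[ m(v)=2\left\lfloor \frac{v}{5}\right\rfloor+\varepsilon,\quad \varepsilon=\begin{cases}0&\text{if } v\equiv 0\pmod 5,\\ 1&\text{if } v\equiv 1\pmod 5,\\ 2&\text{if } v\equiv 2,3,4\pmod 5.\end{cases}\]
   Context: A blocking set of a configuration (a set of points with a collection of 3-element blocks) is a subset $Q$ of the points such that every block contains at least one point of $Q$ and at least one point not in $Q$. *)

From mathcomp Require Import all_boot.
Set Implicit Arguments. Unset Strict Implicit. Unset Printing Implicit Defensive.

(* Points of C_v are Z_v, represented by 'I_v (elements 0..v-1, arithmetic mod v).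
   The block indexed by m : 'I_v is {m, m+1, m+3} (mod v). *)
Definition cyc_block (v : nat) (m : 'I_v) : {set 'I_v} :=
  [set x : 'I_v | [|| nat_of_ord x == m %% v,
                      nat_of_ord x == (m + 1) %% v
                    | nat_of_ord x == (m + 3) %% v]].

Definition blocking_set (v : nat) (Q : {set 'I_v}) : Prop :=
  forall m : 'I_v, (cyc_block m :&: Q != set0) /\ (cyc_block m :\: Q != set0).

Definition eps_v (v : nat) : nat :=
  if v %% 5 == 0 then 0 else if v %% 5 == 1 then 1 else 2.

Definition m_v (v : nat) : nat := 2 * (v %/ 5) + eps_v v.

From mathcomp Require Import all_boot zify.
Set Implicit Arguments. Unset Strict Implicit. Unset Printing Implicit Defensive.

(* A set Q of points of C_v is encoded by its v-periodic indicator x : nat -> bool;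
   Q is blocking iff every window (x m, x (m+1), x (m+3)) is bichromatic.

   Lower bound (valid for every v >= 3), by an amortisation argument: a potential
   [pot] on the three bits (x m, x (m+1), x (m+2)) satisfies, along every
   bichromatic window, 2 + pot(next state) <= 5 * x (m+3) + pot(state).  Summing the
   slack ("defect") of these inequalities over one period gives
   5 #|Q| = 2 v + (total defect).  A finite check shows that a defect of exactly 1
   can never follow two zero defects, so the total defect is never 1; hence
   5 #|Q| >= 2 v and 5 #|Q| <> 2 v + 1, which is exactly m_v v <= #|Q|.

   Upper bound: for v = 5 a + |W| take the stripe pattern 11000 repeated a times
   followed by a short word W; it is blocking as soon as the window around the
   junction, 000 W 110, has only bichromatic blocks.  Five such words (and the
   period-4 stripe 1100 for v = 8) realise m_v v in every residue class mod 5. *)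

Definition bichromatic (a b c : bool) : bool := (a || b || c) && ~~ [&& a, b & c].

Definition blocked (x : nat -> bool) (m : nat) : bool := bichromatic (x m) (x m.+1) (x m.+3).

Definition indicator n (Q : {set 'I_n.+1}) (i : nat) : bool := inord (i %% n.+1) \in Q.

Lemma val_inord_mod n i : nat_of_ord (inord (i %% n.+1) : 'I_n.+1) = i %% n.+1.
Proof. by rewrite inordK // ltn_pmod. Qed.

Lemma periodic_mod (T : Type) (v : nat) (f : nat -> T) :
  (forall i, f (i + v) = f i) -> forall i, f (i %% v) = f i.
Proof.
move=> f_per i; rewrite {2}(divn_eq i v).
elim: (i %/ v) => [|q IH]; first by rewrite mul0n add0n.
by rewrite mulSn -addnA addnC f_per.
Qed.

Lemma mem_cyc_block n (m : nat) (y : 'I_n.+1) :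
  (y \in cyc_block (inord (m %% n.+1) : 'I_n.+1)) =
  [|| y == inord (m %% n.+1), y == inord (m.+1 %% n.+1) | y == inord (m.+3 %% n.+1)].
Proof.
rewrite inE val_inord_mod modn_mod !modnDml addn1 addn3.
have eq_inord k : (nat_of_ord y == k %% n.+1) = (y == inord (k %% n.+1)).
  by apply/eqP/eqP => [<-|->]; rewrite ?inord_val ?val_inord_mod.
by rewrite !eq_inord.
Qed.

Lemma blocking_setP n (Q : {set 'I_n.+1}) :
  blocking_set Q <-> forall m, blocked (indicator Q) m.
Proof.
split=> [Qb m | Qb m].
- have [/set0Pn [y] /setIP [yb yQ] /set0Pn [z] /setDP [zb zQ]] := Qb (inord (m %% n.+1)).
  rewrite !mem_cyc_block in yb zb; rewrite /blocked /indicator; apply/andP; split.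
    by case/or3P: yb => /eqP <-; rewrite yQ ?orbT.
  by case/or3P: zb => /eqP eqz; move: zQ; rewrite eqz => /negbTE ->; rewrite ?andbF.
- have /andP [hit miss] := Qb m; rewrite /indicator -orbA !negb_and in hit miss.
  rewrite -[m]inord_val -(modn_small (ltn_ord m)); split; apply/set0Pn.
    case/or3P: hit => h; [exists (inord (m %% n.+1)) | exists (inord (m.+1 %% n.+1))
                         | exists (inord (m.+3 %% n.+1))];
      by rewrite inE mem_cyc_block h eqxx ?orbT.
  case/or3P: miss => h; [exists (inord (m %% n.+1)) | exists (inord (m.+1 %% n.+1))
                        | exists (inord (m.+3 %% n.+1))];
    by rewrite inE mem_cyc_block h eqxx ?orbT.
Qed.

Lemma card_indicator n (Q : {set 'I_n.+1}) : #|Q| = \sum_(i < n.+1) (indicator Q i : nat).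
Proof.
rewrite -sum1_card big_mkcond /=; apply: eq_bigr => i _.
by rewrite /indicator modn_small // inord_val; case: (i \in Q).
Qed.

Lemma periodic_blocking_set n (x : nat -> bool) :
  (forall i, x (i + n.+1) = x i) -> (forall m, blocked x m) ->
  blocking_set [set i : 'I_n.+1 | x i] /\
  #|[set i : 'I_n.+1 | x i]| = \sum_(i < n.+1) (x i : nat).
Proof.
move=> x_per x_blocked.
have ind_x i : indicator [set i : 'I_n.+1 | x i] i = x i.
  by rewrite /indicator inE val_inord_mod periodic_mod.
split; first by apply/blocking_setP => m; rewrite /blocked !ind_x; exact: x_blocked.
by rewrite card_indicator; apply: eq_bigr => i _; rewrite ind_x.
Qed.

Lemma sum_period_shift1 (v : nat) (f : nat -> nat) :
  f v = f 0 -> \sum_(i < v) f i.+1 = \sum_(i < v) f i.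
Proof.
move=> fv; have split_ends : \sum_(i < v.+1) f i = \sum_(i < v.+1) f i by [].
rewrite {1}big_ord_recl big_ord_recr /= fv addnC in split_ends.
by move/eqP: split_ends; rewrite eqn_add2r => /eqP <-; apply: eq_bigr.
Qed.

Lemma sum_period_shift (v : nat) (f : nat -> nat) : (forall i, f (i + v) = f i) ->
  forall k, \sum_(i < v) f (i + k) = \sum_(i < v) f i.
Proof.
move=> f_per; elim=> [|k IH]; first by apply: eq_bigr => i _; rewrite addn0.
rewrite -IH -(@sum_period_shift1 v (fun i => f (i + k))); last by rewrite addnC f_per.
by apply: eq_bigr => i _; rewrite addSnnS.
Qed.

Lemma mod_shift_neq (v j k : nat) : j < v -> 0 < k < v -> (j + k) %% v != j.
Proof.
move=> jv kv; rewrite -{2}(modn_small jv) -{2}[j]addn0 eqn_modDl mod0n.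
by rewrite modn_small; lia.
Qed.

Lemma sum_period_eq1 (v : nat) (f : nat -> nat) : 3 <= v ->
  (forall i, f (i + v) = f i) -> \sum_(i < v) f i = 1 ->
  exists u, [/\ f u = 0, f u.+1 = 0 & f u.+2 = 1].
Proof.
move=> v3 f_per sum1.
have [j fj_pos] : exists j : 'I_v, 0 < f j.
  apply/existsP; apply: contraT; rewrite negb_exists => /forallP f0.
  by move: sum1; rewrite big1 // => i _; apply/eqP; rewrite -leqn0 leqNgt f0.
move: sum1; rewrite (bigD1 j) //= => sum1.
have fj : f j = 1 by lia.
move: sum1; rewrite fj add1n => -[] /eqP; rewrite sum_nat_eq0 => /forallP others.
have off k : 0 < k < v -> f (j + k) = 0.
  move=> kv; rewrite -(periodic_mod f_per).
  have := others (Ordinal (ltn_pmod (j + k) (ltnW (ltnW v3)))).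
  by rewrite -val_eqE /= mod_shift_neq // => /eqP.
exists (j + (v - 2)); split.
- by rewrite off; lia.
- have -> : (j + (v - 2)).+1 = j + (v - 1) by lia.
  by rewrite off; lia.
- have -> : (j + (v - 2)).+2 = j + v by lia.
  by rewrite f_per.
Qed.

Definition pot (a b c : bool) : nat :=
  match a, b, c with
  | false, false, false => 0 | false, false, true => 3 | false, true, false => 4
  | false, true, true => 6 | true, false, false => 2 | true, false, true => 6
  | true, true, false => 4 | true, true, true => 6 end.

(* Amortised cost: entering the bit d along a bichromatic window (a, b, d) pays
   5 per point and earns 2 per step. *)
Lemma pot_step (a b c d : bool) : bichromatic a b d -> 2 + pot b c d <= 5 * d + pot a b c.
Proof. by case: a; case: b; case: c; case: d. Qed.

Definition defect (a b c d : bool) : nat := (5 * d + pot a b c) - (2 + pot b c d).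

Lemma defect_not_isolated_one (a b c d e g : bool) :
  bichromatic a b d -> bichromatic b c e -> bichromatic c d g ->
  defect a b c d = 0 -> defect b c d e = 0 -> defect c d e g != 1.
Proof. by case: a; case: b; case: c; case: d; case: e; case: g. Qed.

Section LowerBound.
Variables (v : nat) (x : nat -> bool).
Hypothesis x_per : forall i, x (i + v) = x i.
Hypothesis x_blocked : forall m, blocked x m.

Let P (m : nat) : nat := pot (x m) (x m.+1) (x m.+2).
Let D (m : nat) : nat := defect (x m) (x m.+1) (x m.+2) (x m.+3).

(* Summing pot_step over a period: 5 |Q| = 2 v + total defect. *)
Lemma weight_identity : 5 * \sum_(i < v) (x i : nat) = 2 * v + \sum_(m < v) D m.
Proof.
have step m : 5 * x m.+3 + P m = 2 + P m.+1 + D m.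
  by rewrite /P /D /defect subnKC //; exact: pot_step (x_blocked m).
have sum_x3 : \sum_(m < v) 5 * (x m.+3 : nat) = 5 * \sum_(m < v) (x m : nat).
  rewrite big_distrr /=; under eq_bigr => m _ do rewrite -[m.+3]addn3.
  by apply: (@sum_period_shift v (fun i => 5 * x i)) => i; rewrite x_per.
have sum_P1 : \sum_(m < v) P m.+1 = \sum_(m < v) P m.
  under eq_bigr => m _ do rewrite -[m.+1]addn1.
  by apply: sum_period_shift => i; rewrite /P -!addSn !x_per.
have : \sum_(m < v) (5 * x m.+3 + P m) = \sum_(m < v) (2 + P m.+1 + D m).
  by apply: eq_bigr => m _; exact: step.
rewrite big_split /= sum_x3 !big_split /= sum_P1 sum_nat_const card_ord.
by move: (\sum_(i < v) _) (\sum_(i < v) P i) (\sum_(i < v) D i) => sx sP sD; lia.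
Qed.

Lemma defect_sum_neq1 : 3 <= v -> \sum_(m < v) D m != 1.
Proof.
move=> v3; apply/eqP => /(sum_period_eq1 v3) [| u [Du0 Du1 Du2]].
  by move=> i; rewrite /D -!addSn !x_per.
have := defect_not_isolated_one (x_blocked u) (x_blocked u.+1) (x_blocked u.+2) Du0 Du1.
by rewrite /D in Du2; rewrite Du2.
Qed.

Lemma weight_bounds : 3 <= v ->
  2 * v <= 5 * \sum_(i < v) (x i : nat) /\ 5 * \sum_(i < v) (x i : nat) != (2 * v).+1.
Proof.
move=> v3; rewrite weight_identity; have /eqP := defect_sum_neq1 v3.
by move: (\sum_(m < v) D m) => d; lia.
Qed.

End LowerBound.

Lemma m_v_min (v c : nat) : 2 * v <= 5 * c -> 5 * c != (2 * v).+1 -> m_v v <= c.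
Proof.
rewrite /m_v /eps_v; have := divn_eq v 5; have := ltn_pmod v (isT : 0 < 5).
move: (v %/ 5) (v %% 5) => q r r_lt5 v_eq.
by case: r r_lt5 v_eq => [|[|[|[|[|r]]]]] //= _ ->; lia.
Qed.

Lemma lower_bound n (Q : {set 'I_n.+1}) : 3 <= n.+1 -> blocking_set Q -> m_v n.+1 <= #|Q|.
Proof.
move=> v3 /blocking_setP Q_blocked.
have Q_per i : indicator Q (i + n.+1) = indicator Q i by rewrite /indicator modnDr.
have [lower not_next] := weight_bounds Q_per Q_blocked v3.
by rewrite card_indicator; exact: m_v_min.
Qed.

Definition stripe_word (a : nat) (W : seq bool) (i : nat) : bool :=
  if i < 5 * a then i %% 5 < 2 else nth false W (i - 5 * a).

(* The bits around the cyclic junction of stripe_word: 000 W 110. *)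
Definition junction (W : seq bool) : seq bool :=
  [:: false; false; false] ++ W ++ [:: true; true; false].

Lemma blocked_mod (p : nat) (c : nat -> bool) m :
  blocked (fun i => c (i %% p)) m = blocked (fun i => c (i %% p)) (m %% p).
Proof.
by rewrite /blocked -(addn3 m) -(addn1 m) -(addn3 (m %% p)) -(addn1 (m %% p))
           !modnDml modn_mod.
Qed.

Lemma stripe_blocked (p m : nat) : 4 <= p <= 5 -> blocked (fun i => i %% p < 2) m.
Proof.
move=> p_bd; rewrite (@blocked_mod p (fun r => r < 2)).
have p_gt0 : 0 < p by lia.
have := ltn_pmod m p_gt0; have : p = 4 \/ p = 5 by lia.
by case=> ->; case: (m %% _) => [|[|[|[|[|r]]]]].
Qed.

Lemma stripe_sum (a : nat) : \sum_(0 <= i < 5 * a) ((i %% 5 < 2) : nat) = 2 * a.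
Proof.
elim: a => [|k IH]; first by rewrite muln0 big_geq.
rewrite mulnS addnC (big_cat_nat (leq0n _) (leq_addr 5 _)) /= IH.
rewrite -{1}[5 * k]add0n big_addn addKn.
rewrite (eq_bigr (fun i => ((i %% 5 < 2) : nat))); last first.
  by move=> i _; rewrite addnC mulnC modnMDl.
by rewrite /index_iota /= !big_cons big_nil /=; lia.
Qed.

Section StripeConstruction.
Variables (a : nat) (W : seq bool).
Hypothesis a_gt0 : 0 < a.
Hypothesis junction_ok : all (blocked (nth false (junction W))) (iota 0 (size W + 3)).

Let v := 5 * a + size W.

Lemma stripe_word_junction s : s < size W + 6 ->
  stripe_word a W ((5 * a - 3 + s) %% v) = nth false (junction W) s.
Proof.
move=> hs; rewrite /stripe_word /junction.
case: (ltnP s 3) => [s3 | s3].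
  (* the last three bits of the stripe, 000 *)
  rewrite modn_small; last by rewrite /v; lia.
  have -> : 5 * a - 3 + s < 5 * a by lia.
  have -> : 5 * a - 3 + s = (a - 1) * 5 + (s + 2) by lia.
  by rewrite modnMDl modn_small; [case: s s3 {hs} => [|[|[|]]] | lia].
case: (ltnP s (size W + 3)) => [sL | sL].
  (* the word W *)
  rewrite modn_small; last by rewrite /v; lia.
  have -> : 5 * a - 3 + s < 5 * a = false by apply/negbTE; lia.
  rewrite nth_cat ifN /=; last by lia.
  by rewrite nth_cat ifT; [congr nth; lia | lia].
(* past the end of the period: the first three bits of the stripe, 110 *)
have -> : 5 * a - 3 + s = v + (s - 3 - size W) by rewrite /v; lia.
rewrite modnDl modn_small; last by rewrite /v; lia.
have -> : s - 3 - size W < 5 * a by lia.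
rewrite modn_small; last by lia.
rewrite nth_cat ifN /=; last by lia.
rewrite nth_cat ifN; last by lia.
have : s - 3 - size W < 3 by lia.
by case: (s - 3 - size W) => [|[|[|]]].
Qed.

(* Windows starting before 5a - 3 lie inside the stripe; the others are windows
   of the junction. *)
Lemma stripe_word_blocked m : blocked (fun i => stripe_word a W (i %% v)) m.
Proof.
have v_gt0 : 0 < v by rewrite /v; lia.
rewrite blocked_mod; move: (m %% v) (ltn_pmod m v_gt0) => {}m mv.
case: (ltnP (m + 3) (5 * a)) => m_stripe.
  rewrite /blocked !(@modn_small _ v) /stripe_word ?ifT; try lia.
  exact: (@stripe_blocked 5 m).
have -> : m = 5 * a - 3 + (m - (5 * a - 3)) by lia.
rewrite /blocked -!addnS !stripe_word_junction; try lia.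
by apply: (allP junction_ok); rewrite mem_iota; lia.
Qed.

End StripeConstruction.

Lemma sum_nth_count (s : seq bool) :
  \sum_(0 <= i < size s) (nth false s i : nat) = count id s.
Proof.
elim: s => [|b s IH]; first by rewrite big_geq.
by rewrite /= big_nat_recl // IH.
Qed.

Lemma stripe_word_sum (a : nat) (W : seq bool) :
  \sum_(0 <= i < 5 * a + size W) (stripe_word a W i : nat) = 2 * a + count id W.
Proof.
rewrite (big_cat_nat (leq0n _) (leq_addr _ _)) /=.
rewrite (@eq_big_nat _ _ _ 0 (5 * a) _ (fun i => ((i %% 5 < 2) : nat))); last first.
  by move=> i i_lt; rewrite /stripe_word ifT //; lia.
rewrite stripe_sum -{1}[5 * a]add0n big_addn addKn.
rewrite (@eq_big_nat _ _ _ 0 (size W) _ (fun i => (nth false W i : nat))); last first.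
  by move=> i i_lt; rewrite /stripe_word ifF ?addnK //; lia.
by rewrite sum_nth_count.
Qed.

Lemma stripe_blocking_set n (a : nat) (W : seq bool) : 0 < a ->
  all (blocked (nth false (junction W))) (iota 0 (size W + 3)) ->
  n.+1 = 5 * a + size W ->
  exists Q : {set 'I_n.+1}, blocking_set Q /\ #|Q| = 2 * a + count id W.
Proof.
move=> a_gt0 W_ok v_eq; pose x i := stripe_word a W (i %% n.+1).
have x_per i : x (i + n.+1) = x i by rewrite /x modnDr.
have x_blocked m : blocked x m by rewrite /x v_eq; exact: stripe_word_blocked.
have [Qb Qcard] := periodic_blocking_set x_per x_blocked.
exists [set i : 'I_n.+1 | x i]; split => //; rewrite Qcard.
rewrite (eq_bigr (fun i : 'I_n.+1 => (stripe_word a W i : nat))) => [|i _]; last first.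
  by rewrite /x modn_small.
by rewrite -(big_mkord xpredT (fun i => (stripe_word a W i : nat))) v_eq stripe_word_sum.
Qed.

Lemma stripe4_blocking_set : exists Q : {set 'I_8}, blocking_set Q /\ #|Q| = 4.
Proof.
have x_per i : (i + 8) %% 4 < 2 = (i %% 4 < 2) by rewrite -modnDmr addn0.
have [Qb Qcard] := @periodic_blocking_set 7 _ x_per (fun m => @stripe_blocked 4 m isT).
by exists [set i : 'I_8 | i %% 4 < 2]; rewrite Qcard !big_ord_recr big_ord0.
Qed.

(* Choice of the stripe length and junction word in each residue class of v
   mod 5; for v = 8 the stripe 11000 does not fit and 1100 1100 is used. *)
Lemma upper_bound n : 8 <= n.+1 ->
  exists Q : {set 'I_n.+1}, blocking_set Q /\ #|Q| = m_v n.+1.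
Proof.
move=> v8; rewrite /m_v /eps_v.
have := divn_eq n.+1 5; have := ltn_pmod n.+1 (isT : 0 < 5).
move: (n.+1 %/ 5) (n.+1 %% 5) => q r r_lt5 v_eq.
case: r r_lt5 v_eq => [|[|[|[|[|r]]]]] //= _ v_eq.
- have [Q [Qb Qc]] := @stripe_blocking_set n q [::] ltac:(lia) isT ltac:(rewrite v_eq /=; lia).
  by exists Q; rewrite Qc /=; split => //; lia.
- have [Q [Qb Qc]] := @stripe_blocking_set n q [:: true] ltac:(lia) isT
    ltac:(rewrite v_eq /=; lia).
  by exists Q; rewrite Qc /=; split => //; lia.
- have [Q [Qb Qc]] := @stripe_blocking_set n (q - 1) [:: true; true; true; false; false; false; true]
    ltac:(lia) isT ltac:(rewrite v_eq /=; lia).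
  by exists Q; rewrite Qc /=; split => //; lia.
- have [q1 | q2] := leqP q 1.
    have n7 : n = 7 by lia.
    have q1' : q = 1 by lia.
    by subst n q; exact: stripe4_blocking_set.
  have [Q [Qb Qc]] := @stripe_blocking_set n (q - 1) [:: true; true; false; false; true; true; false; false]
    ltac:(lia) isT ltac:(rewrite v_eq /=; lia).
  by exists Q; rewrite Qc /=; split => //; lia.
- have [Q [Qb Qc]] := @stripe_blocking_set n q [:: true; true; false; false] ltac:(lia) isT
    ltac:(rewrite v_eq /=; lia).
  by exists Q; rewrite Qc /=; split => //; lia.
Qed.

Theorem mainTheorem4 (v : nat) (hv : 8 <= v) :
  (exists Q : {set 'I_v}, blocking_set Q /\ #|Q| = m_v v) /\
  (forall Q : {set 'I_v}, blocking_set Q -> m_v v <= #|Q|).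
Proof.
case: v hv => [//|n] v8; split; first exact: upper_bound.
by move=> Q; apply: lower_bound; lia.
Qed.
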